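(* Let $n\ge 2$ be an integer and $k$ an integer with $0\le k\le n-1$. Then $$e_k\left(\left\{\sin^2\left(\tfrac{j\pi}{2n}\right) : j=1,\dots,n-1\right\}\right) = \frac{4^{-k}(2n-k-1)!}{(2n-2k-1)!\,k!}.$$
   Context: $e_k(\alpha_1,\dots,\alpha_m)$ denotes the degree-$k$ elementary symmetric function of $\alpha_1,\dots,\alpha_m$ (with $e_0=1$). *)

From HB Require Import structures.
From mathcomp Require Import all_boot all_order all_algebra.
From mathcomp Require Import all_classical all_reals all_analysis.
Set Implicit Arguments. Unset Strict Implicit. Unset Printing Implicit Defensive.
Import Order.TTheory GRing.Theory Num.Theory.
Local Open Scope ring_scope.

Definition elemsym (R : comNzRingType) (m k : nat) (a : 'I_m -> R) : R :=
  \sum_(A : {set 'I_m} | #|A| == k) \prod_(i in A) a i.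

From HB Require Import structures.
From mathcomp Require Import all_boot all_order all_algebra.
From mathcomp Require Import all_classical all_reals all_analysis.
From mathcomp Require Import ring lra zify.
Set Implicit Arguments. Unset Strict Implicit. Unset Printing Implicit Defensive.
Import Order.TTheory GRing.Theory Num.Theory.
Local Open Scope ring_scope.

(* The polynomial P_m(x) = sum_i (-4)^i C(m+1+i, 2i+1) x^i satisfies
   sin (2(m+1)t) = sin (2t) P_m(sin^2 t), by the three-term recurrence of
   sin ((m+2)x).  Hence P_m, of degree m, has the m distinct roots
   sin^2 (j pi / (2(m+1))), 1 <= j <= m, and Vieta's formulas read e_k off the
   coefficient of x^(m-k): e_k = 4^-k C(2m+1-k, k). *)

Lemma bin_diff2 n k :
  ('C(n.+2, k.+2) + 'C(n, k.+2) = 'C(n.+1, k.+2) * 2 + 'C(n, k))%N.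
Proof. rewrite !binS; lia. Qed.

Lemma natr_bin_fact (F : numFieldType) N k : (k <= N)%N ->
  'C(N, k)%:R = N`!%:R / ((N - k)`!%:R * k`!%:R) :> F.
Proof.
move=> leNk; rewrite -(bin_fact leNk) (mulnC k`!) natrM.
by rewrite [((N - k)`! * _)%:R]natrM mulfK.
Qed.

Lemma elemsym_nth (R : comNzRingType) (s : seq R) m k (a : 'I_m -> R) :
  size s = m -> (forall i : 'I_m, s`_i = a i) ->
  elemsym k (fun i : 'I_(size s) => s`_i) = elemsym k a.
Proof.
by move=> sz_s; subst m => sa; apply: eq_bigr => A _; apply: eq_bigr => i _.
Qed.

Lemma coef_elemsym_roots (F : fieldType) m (p : {poly F}) (a : 'I_m -> F) k :
  size p = m.+1 -> injective a -> (forall i, root p (a i)) -> (k <= m)%N ->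
  p`_(m - k) = lead_coef p * (-1) ^+ k * elemsym k a.
Proof.
move=> sz_p inj_a root_a le_km.
set s := [seq a i | i <- enum 'I_m].
have sz_s : size s = m by rewrite size_map size_enum_ord.
have s_a (i : 'I_m) : s`_i = a i.
  by rewrite (nth_map i) ?size_enum_ord // nth_ord_enum.
have p_prod : p = lead_coef p *: \prod_(z <- s) ('X - z%:P).
  apply: all_roots_prod_XsubC; first by rewrite sz_s.
  - by apply/allP => _ /mapP[i _ ->].
  - by rewrite uniq_rootsE map_inj_uniq ?enum_uniq.
rewrite {1}p_prod coefZ coef_prod_XsubC; last by rewrite sz_s leq_subr.
have -> : (size s - (m - k) = k)%N by rewrite sz_s subKn.
by rewrite -(elemsym_nth k sz_s s_a) mulrA.
Qed.

Section ChebyshevSin.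
Variable R : realType.

(* U_m(1 - 2X), with U_m the Chebyshev polynomial of the second kind. *)
Definition chebU_sq (m : nat) : {poly R} :=
  \poly_(i < m.+1) ((-4) ^+ i * 'C(m.+1 + i, i.*2.+1)%:R).

Lemma coef_chebU_sq m i :
  (chebU_sq m)`_i = (-4) ^+ i * 'C(m.+1 + i, i.*2.+1)%:R.
Proof.
rewrite coef_poly; case: ltnP => // le_mi.
by rewrite bin_small ?mulr0 // -addnn; lia.
Qed.

Lemma chebU_sq0 : chebU_sq 0 = 1.
Proof.
apply/polyP => -[|i]; rewrite coef_chebU_sq coefC //= ?expr0 ?mul1r //.
by rewrite bin_small ?mulr0 // doubleS; lia.
Qed.

Lemma chebU_sq1 : chebU_sq 1 = 2%:P - 4%:P * 'X.
Proof.
apply/polyP => -[|[|i]]; rewrite coef_chebU_sq coefB coefC coefCM coefX /=.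
- by rewrite expr0 mul1r mulr0 subr0.
- by rewrite expr1 mulr1 sub0r mulr1.
- by rewrite bin_small ?mulr0 ?subr0 // !doubleS; lia.
Qed.

Lemma chebU_sqSS m :
  chebU_sq m.+2 = (2%:P - 4%:P * 'X) * chebU_sq m.+1 - chebU_sq m.
Proof.
apply/polyP => i; rewrite coefB mulrBl coefB coefCM -mulrA coefCM coefXM.
rewrite !coef_chebU_sq; case: i => [|j] /=.
  by rewrite !expr0 !mul1r !addn0 !bin1 mulr0 subr0 -!natr1; ring.
set n := (m + j.+2)%N.
have -> : (m.+3 + j.+1 = n.+2)%N by rewrite /n; lia.
have -> : (m.+2 + j.+1 = n.+1)%N by rewrite /n; lia.
have -> : (m.+2 + j = n)%N by rewrite /n; lia.
have -> : (m.+1 + j.+1 = n)%N by rewrite /n; lia.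
move: (bin_diff2 n j.*2.+1); rewrite -doubleS.
move: 'C(n.+2, _) 'C(n.+1, _) 'C(n, j.+1.*2.+1) 'C(n, j.*2.+1) => c4 c3 c2 c1.
move=> /(congr1 (fun c => c%:R : R)); rewrite !natrD natrM.
move=> /(canRL (addrK _)) ->.
rewrite exprS; ring.
Qed.

Lemma size_chebU_sq m : size (chebU_sq m) = m.+1.
Proof.
rewrite size_poly_eq // addSn addnn binn mulr1.
by rewrite expf_neq0 // oppr_eq0 pnatr_eq0.
Qed.

Lemma lead_coef_chebU_sq m : lead_coef (chebU_sq m) = (-4) ^+ m.
Proof.
by rewrite lead_coefE size_chebU_sq coef_chebU_sq addSn addnn binn mulr1.
Qed.

Lemma sin_mulrSSn (x : R) m :
  sin (x *+ m.+2) = 2 * cos x * sin (x *+ m.+1) - sin (x *+ m).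
Proof.
have -> : x *+ m.+2 = x *+ m.+1 + x by rewrite mulrSr.
have -> : x *+ m = x *+ m.+1 - x by rewrite mulrSr addrK.
by rewrite sinD sinB; ring.
Qed.

Lemma sinpi_mulrn k : sin (pi *+ k) = 0 :> R.
Proof. by elim: k => [|k IHk]; rewrite ?sin0 // mulrSr sinDpi IHk oppr0. Qed.

Lemma sin_mulr2nSn (t : R) m :
  sin (t *+ 2 *+ m.+1) = sin (t *+ 2) * (chebU_sq m).[sin t ^+ 2].
Proof.
pose P m := sin (t *+ 2 *+ m.+1) = sin (t *+ 2) * (chebU_sq m).[sin t ^+ 2].
have cos2 : 2 * cos (t *+ 2) = (2%:P - 4%:P * 'X).[sin t ^+ 2].
  rewrite cos_mulr2n cos2sin2.
  by rewrite !(hornerD, hornerN, hornerM, hornerC, hornerX); ring.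
suff /(_ m)[] : forall m, P m /\ P m.+1 by [].
elim=> [|{}m [IHm IHm1]]; rewrite /P.
  split; first by rewrite chebU_sq0 hornerC mulr1.
  by rewrite sin_mulrSSn mulr0n sin0 mulr1n chebU_sq1 -cos2 subr0 mulrC.
split=> //; rewrite (sin_mulrSSn (t *+ 2)) IHm IHm1 chebU_sqSS.
by rewrite hornerD hornerN hornerM -cos2; ring.
Qed.

Lemma sqr_sin_inj : {in `[0, pi / 2] &, injective (fun x : R => sin x ^+ 2)}.
Proof.
have pi_gt0 := pi_gt0 R.
have sin_ge0 z : 0 <= z <= pi / 2 -> 0 <= sin z.
  by case/andP=> z_ge0 z_le; apply: sin_ge0_pi; rewrite z_ge0 /=; lra.
move=> x y; rewrite !in_itv /= => x_itv y_itv /eqP.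
rewrite eqrXn2 ?sin_ge0 // => /eqP /sin_inj; apply; rewrite in_itv /=.
- by case/andP: x_itv => x_ge0 x_le; rewrite x_le andbT; lra.
- by case/andP: y_itv => y_ge0 y_le; rewrite y_le andbT; lra.
Qed.

Lemma angle_in_pihalf m j : (j < m)%N ->
  0 < j.+1%:R * (pi : R) / (2 * m.+1)%:R < pi / 2.
Proof.
move=> lt_jm; have pi_gt0 := pi_gt0 R.
rewrite divr_gt0 ?mulr_gt0 ?ltr0n //= ltr_pdivrMr ?ltr0n // natrM.
by rewrite mulrA divfK ?pnatr_eq0 // mulrC ltr_pM2l // ltr_nat ltnS.
Qed.

Lemma root_chebU_sq m j : (j < m)%N ->
  root (chebU_sq m) (sin (j.+1%:R * pi / (2 * m.+1)%:R) ^+ 2).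
Proof.
move=> /angle_in_pihalf; set t := _ / _ => /andP[t_gt0 t_lt].
have t_period : t *+ 2 *+ m.+1 = pi *+ j.+1.
  by rewrite -mulrnA -mulr_natr /t divfK ?pnatr_eq0 // mulr_natl.
have := sin_mulr2nSn t m; rewrite t_period sinpi_mulrn => /esym/eqP.
rewrite mulf_eq0 => /orP[|/eqP //].
by rewrite gt_eqF // sin_gt0_pi // mulr2n; apply/andP; split; lra.
Qed.

Lemma elemsym_sin2 m k : (k <= m)%N ->
  elemsym k (fun i : 'I_m => sin (i.+1%:R * pi / (2 * m.+1)%:R) ^+ 2 : R)
  = 4 ^- k * 'C(m.*2.+1 - k, k)%:R.
Proof.
move=> le_km; set a := fun i : 'I_m => _.
have angle_itv (i : 'I_m) : i.+1%:R * pi / (2 * m.+1)%:R \in `[0, pi / 2 : R].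
  have /andP[? ?] := angle_in_pihalf (ltn_ord i).
  by rewrite in_itv /= !ltW.
have inj_a : injective a.
  move=> i1 i2 /(sqr_sin_inj (angle_itv i1) (angle_itv i2)).
  move=> /(congr1 (fun x => x * (2 * m.+1)%:R / pi)).
  rewrite !divfK ?pnatr_eq0 // !mulfK ?(gt_eqF (pi_gt0 R)) //.
  by move=> /eqP; rewrite eqr_nat eqSS => /eqP /val_inj.
have := coef_elemsym_roots (size_chebU_sq m) inj_a
  (fun i => root_chebU_sq (ltn_ord i)) le_km.
rewrite coef_chebU_sq lead_coef_chebU_sq.
have -> : (m.+1 + (m - k) = m.*2.+1 - k)%N by rewrite -addnn; lia.
have -> : ((m - k).*2.+1 = m.*2.+1 - k - k)%N by rewrite -!addnn; lia.
rewrite bin_sub; last by rewrite -addnn; lia.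
have -> : (-4) ^+ m = (-4) ^+ (m - k) * (-4) ^+ k :> R by rewrite -exprD subnK.
have four_neq0 : 4 != 0 :> R by rewrite pnatr_eq0.
have /expf_neq0 neg4X_neq0 : -4 != 0 :> R by rewrite oppr_eq0.
rewrite -!mulrA => /(mulfI (neg4X_neq0 _)).
rewrite mulrA -exprMn mulrN1 opprK => ->.
by rewrite mulKf // expf_neq0.
Qed.
End ChebyshevSin.

Theorem mainTheorem8 (R : realType) (n k : nat) :
  (2 <= n)%N -> (k <= n.-1)%N ->
  @elemsym R n.-1 k (fun i : 'I_n.-1 =>
            sin ((i.+1)%:R * pi / (2 * n)%:R) ^+ 2 : R)
  = (4%:R ^- k) * ((2 * n - k - 1)`!)%:R
      / (((2 * n - 2 * k - 1)`!)%:R * (k`!)%:R).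
Proof.
case: n => [|m] // _ /= le_km.
rewrite elemsym_sin2 // natr_bin_fact; last by rewrite -addnn; lia.
have -> : (2 * m.+1 - k - 1 = m.*2.+1 - k)%N by rewrite -addnn; lia.
have -> : (2 * m.+1 - 2 * k - 1 = m.*2.+1 - k - k)%N by rewrite -addnn; lia.
by rewrite mulrA.
Qed.
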